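(* Let $\phi=\frac{1+\sqrt5}{2}$ be the golden ratio. For every $\epsilon>0$ there exists a (weighted) instance of the atomic two-stage facility location game that admits no $(\phi-\epsilon)$-approximate subgame perfect equilibrium.
   Context: Atomic two-stage facility location game. An instance is a triple $(H,U,k)$: $H=(V,E,w)$ is a finite directed graph with vertex weights $w:V\to\mathbb{Q}_{>0}$; $F$ is a set of $k$ facility agents; $U:F\to 2^V$ assigns to each facility agent $f$ a set $U(f)\subseteq V$ of feasible locations. The vertices are simultaneously the clients and the possible locations. A facility placement profile (FPP) is a vector $\mathbf{s}=(s_f)_{f\in F}$ with $s_f\in U(f)$ (several facilities may choose the same vertex); $S$ denotes the set of all FPPs. For a client $v$ let $N(v)=\{v\}\cup\{u:(v,u)\in E\}$ and $N_{\mathbf{s}}(v)=\{f\in F: s_f\in N(v)\}$. A client profile for $\mathbf{s}$ is $\sigma(\mathbf{s})$, assigning to each client $v$ numbers $\sigma(\mathbf{s})_{v,f}\in[0,1]$ ($f\in F$) with $\sigma(\mathbf{s})_{v,f}=0$ for $f\notin N_{\mathbf{s}}(v)$ and $\sum_{f\in N_{\mathbf{s}}(v)}\sigma(\mathbf{s})_{v,f}=1$ whenever $N_{\mathbf{s}}(v)\neq\varnothing$. A full client profile $\sigma$ specifies a client profile $\sigma(\mathbf{s}')$ for every $\mathbf{s}'\in S$. The load of facility $f$ is $\ell_f(\mathbf{s},\sigma)=\sum_{v\in V}\sigma(\mathbf{s})_{v,f}w(v)$. The cost of client $v$ is $L_v(\mathbf{s},\sigma)=w(v)+\sum_{f\in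 N_{\mathbf{s}}(v)}\sigma(\mathbf{s})_{v,f}\,\ell_{-v,f}(\mathbf{s},\sigma)$ where $\ell_{-v,f}(\mathbf{s},\sigma)=\sum_{u\neq v}\sigma(\mathbf{s})_{u,f}w(u)$. $\sigma(\mathbf{s})$ is a client equilibrium if no client $v$ can strictly decrease $L_v$ by unilaterally changing her own distribution to another feasible one; $\sigma$ is a full client equilibrium if $\sigma(\mathbf{s}')$ is a client equilibrium for every $\mathbf{s}'\in S$. For a real number $\alpha$, a pair $(\mathbf{s},\sigma)$ is an $\alpha$-approximate subgame perfect equilibrium if $\sigma$ is a full client equilibrium and there is no facility $f$ and location $s'_f\in U(f)$ with $\ell_f((s'_f,\mathbf{s}_{-f}),\sigma)>\alpha\cdot\ell_f(\mathbf{s},\sigma)$ (the paper considers $\alpha\ge 1$). *)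

From HB Require Import structures.
From mathcomp Require Import all_boot all_order all_algebra.
From mathcomp Require Import reals.
Set Implicit Arguments. Unset Strict Implicit. Unset Printing Implicit Defensive.
Import Order.TTheory GRing.Theory Num.Theory.
Local Open Scope ring_scope.

(* An instance (H, U, k): vertices 'I_n, directed edge relation E,
   rational vertex weights w, k facility agents 'I_k, feasible sets U. *)
Record fl_instance := FLInstance {
  fl_n : nat;
  fl_E : rel 'I_fl_n;
  fl_w : 'I_fl_n -> rat;
  fl_k : nat;
  fl_U : 'I_fl_k -> {set 'I_fl_n}
}.
Arguments fl_E : clear implicits.
Arguments fl_w : clear implicits.
Arguments fl_U : clear implicits.

Definition valid_instance (I : fl_instance) : Prop :=
  (forall v, 0 < fl_w I v) /\ (forall f, fl_U I f != set0).

Section Game.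
Variables (R : realType) (I : fl_instance).
Local Notation V := ('I_(fl_n I)).
Local Notation F := ('I_(fl_k I)).
Local Notation w := (fun v : V => (ratr (fl_w I v) : R)).

Definition FPP := {ffun F -> V}.

Definition is_FPP (s : FPP) : Prop := forall f, s f \in fl_U I f.

Definition Nb (v : V) : {set V} := [set u | (u == v) || fl_E I v u].

Definition Ns (s : FPP) (v : V) : {set F} := [set f | s f \in Nb v].

Definition cprofile := V -> F -> R.

Definition feasible_dist (s : FPP) (v : V) (tau : F -> R) : Prop :=
  (forall f, 0 <= tau f <= 1) /\
  (forall f, f \notin Ns s v -> tau f = 0) /\
  (Ns s v != set0 -> \sum_(f in Ns s v) tau f = 1).

Definition is_cprofile (s : FPP) (sg : cprofile) : Prop :=
  forall v, feasible_dist s v (sg v).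

Definition load (sg : cprofile) (f : F) : R :=
  \sum_(v : V) sg v f * w v.

Definition load_minus (sg : cprofile) (v : V) (f : F) : R :=
  \sum_(u : V | u != v) sg u f * w u.

Definition client_cost (s : FPP) (sg : cprofile) (v : V) : R :=
  w v + \sum_(f in Ns s v) sg v f * load_minus sg v f.

Definition upd (sg : cprofile) (v : V) (tau : F -> R) : cprofile :=
  fun u f => if u == v then tau f else sg u f.

Definition client_eq (s : FPP) (sg : cprofile) : Prop :=
  is_cprofile s sg /\
  forall v tau, feasible_dist s v tau ->
    ~ (client_cost s (upd sg v tau) v < client_cost s sg v).

Definition full_cprofile := FPP -> cprofile.

Definition full_client_eq (sg : full_cprofile) : Prop :=
  forall s', is_FPP s' -> client_eq s' (sg s').

Definition deviate (s : FPP) (f : F) (x : V) : FPP :=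
  [ffun g => if g == f then x else s g].

Definition approx_SPE (alpha : R) (s : FPP) (sg : full_cprofile) : Prop :=
  is_FPP s /\ full_client_eq sg /\
  ~ (exists f, exists2 x, x \in fl_U I f &
       load (sg (deviate s f x)) f > alpha * load (sg s) f).

End Game.

Definition golden_ratio (R : realType) : R := (1 + Num.sqrt 5) / 2.

From mathcomp Require Import all_boot all_order all_algebra.
From mathcomp Require Import reals.
From mathcomp Require Import ring lra.
Import Order.TTheory GRing.Theory Num.Theory.
Set Implicit Arguments.
Unset Strict Implicit.
Unset Printing Implicit Defensive.
Local Open Scope ring_scope.

(* The instance has five clients v0..v4 with weights x, 1 + h, x + h, x - 1, 1 and
   arcs v0 -> v1 -> v2, v4 -> v0, v4 -> v3; facility f0 may open at v0 or v2, facility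
   f1 at v1 or v3.  In each of the four placements every client sees at most one
   facility, except at most one client which sees both and, in a client equilibrium,
   must go wholly to the facility that is lighter without it.  The loads are thus
   determined, and the placements form a cycle
     (v0,v1) -> (v0,v3) -> (v2,v3) -> (v2,v1) -> (v0,v1)
   of unilateral deviations multiplying the deviator's load by x / (1 + h),
   (1 + x + 2h) / x, (x + 1 + h) / x and (x + 1) / (x + h).  As h -> 0 these tend to
   x and 1 + 1/x, and x < 1 + 1/x exactly when x < phi; choosing a rational x in
   (max(alpha, 1), phi) and then h small, every placement has a deviation gaining more
   than alpha = phi - eps. *)

Section ClientProfiles.
Variables (R : realType) (I : fl_instance) (s : FPP I).
Implicit Types (sg : cprofile R I) (v : 'I_(fl_n I)) (f g : 'I_(fl_k I)).

Lemma cprofile_eq0 sg v f : is_cprofile s sg -> f \notin Ns s v -> sg v f = 0.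
Proof. by move=> /(_ v) [_ [out_eq0 _]] /out_eq0. Qed.

Lemma cprofile_eq1 sg v f : is_cprofile s sg -> f \in Ns s v ->
  (forall g, g != f -> sg v g = 0) -> sg v f = 1.
Proof.
move=> /(_ v) [_ [_ sum_eq1]] fv others0.
have /sum_eq1 <- : Ns s v != set0 by apply/set0Pn; exists f.
by rewrite (bigD1 f) //= big1 ?addr0 // => g /andP [_ /others0].
Qed.

Lemma cprofile_unshared sg v f : is_cprofile s sg ->
  {in Ns s v &, forall g g', g = g'} -> sg v f = (f \in Ns s v)%:R.
Proof.
move=> cp unshared; have [fv | fNv] := boolP (f \in Ns s v); last exact: cprofile_eq0.
apply: cprofile_eq1 => // g gf; apply: cprofile_eq0 => //.
by apply: contra gf => gv; rewrite (unshared g f).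
Qed.

Lemma load_minus_upd sg v tau f : load_minus (upd sg v tau) v f = load_minus sg v f.
Proof. by apply: eq_bigr => u /negbTE uv; rewrite /upd uv. Qed.

Lemma sum_pick2 (A : {set 'I_(fl_k I)}) (G : 'I_(fl_k I) -> R) f g :
  f \in A -> g \in A -> f != g ->
  \sum_(j in A) G j = G f + G g + \sum_(j in A | (j != f) && (j != g)) G j.
Proof.
move=> fA gA fg; rewrite (bigD1 f) //= (bigD1 g) /= ?gA 1?eq_sym // addrA.
by congr (_ + _ + _); apply: eq_bigl => j; rewrite andbA.
Qed.

Definition shift_mass (tau : 'I_(fl_k I) -> R) f g j : R :=
  if j == f then 0 else if j == g then tau g + tau f else tau j.

Lemma sum_shift_mass (A : {set 'I_(fl_k I)}) (tau G : 'I_(fl_k I) -> R) f g :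
  f \in A -> g \in A -> f != g ->
  \sum_(j in A) shift_mass tau f g j * G j =
    \sum_(j in A) tau j * G j - tau f * (G f - G g).
Proof.
move=> fA gA fg; rewrite !(sum_pick2 _ fA gA fg) /shift_mass eqxx eq_sym (negbTE fg) eqxx.
rewrite (eq_bigr (fun j => tau j * G j)); first ring.
by move=> j /andP [_ /andP [/negbTE -> /negbTE ->]].
Qed.

Lemma feasible_shift_mass v tau f g : feasible_dist s v tau ->
  f \in Ns s v -> g \in Ns s v -> f != g -> feasible_dist s v (shift_mass tau f g).
Proof.
move=> [bounds [out0 sum1]] fv gv fg; rewrite /shift_mass; split; [|split].
- move=> j; case: eqP => _; first by rewrite lexx ler01.
  case: eqP => _; last exact: bounds.
  have nonempty : Ns s v != set0 by apply/set0Pn; exists f.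
  have rest_ge0 : 0 <= \sum_(j in Ns s v | (j != f) && (j != g)) tau j.
    by apply: sumr_ge0 => i _; have /andP [] := bounds i.
  have := sum1 nonempty; rewrite (sum_pick2 _ fv gv fg).
  have /andP [tf_ge0 _] := bounds f; have /andP [tg_ge0 _] := bounds g.
  by move=> sum_eq1; apply/andP; split; lra.
- move=> j jNv; case: eqP => [// | _].
  by rewrite ifF ?out0 //; apply: contraNF jNv => /eqP ->.
- move=> nonempty; have := sum_shift_mass tau (fun=> 1) fv gv fg.
  under eq_bigr do rewrite mulr1; rewrite subrr mulr0 subr0 => ->.
  by under eq_bigr do rewrite mulr1; exact: sum1.
Qed.

(* Moving client [v]'s share of [f] onto the less loaded [g] would lower its cost. *)
Lemma client_eq_avoid sg v f g : client_eq s sg -> f \in Ns s v -> g \in Ns s v ->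
  load_minus sg v g < load_minus sg v f -> sg v f = 0.
Proof.
move=> [cp stable] fv gv lt_gf.
have fg : f != g by apply: contraTneq lt_gf => ->; rewrite ltxx.
have := stable v _ (feasible_shift_mass (cp v) fv gv fg); rewrite /client_cost.
under eq_bigr do rewrite load_minus_upd /upd eqxx.
rewrite sum_shift_mass // => not_lt; have [bounds _] := cp v.
apply/eqP; rewrite eq_le; have /andP [-> _] := bounds f; rewrite andbT leNgt.
apply/negP => sgf_gt0; apply: not_lt.
have : 0 < sg v f * (load_minus sg v f - load_minus sg v g) by rewrite mulr_gt0 ?subr_gt0.
lra.
Qed.
End ClientProfiles.

Definition v0 : 'I_5 := @Ordinal 5 0 isT.
Definition v1 : 'I_5 := @Ordinal 5 1 isT.
Definition v2 : 'I_5 := @Ordinal 5 2 isT.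
Definition v3 : 'I_5 := @Ordinal 5 3 isT.
Definition v4 : 'I_5 := @Ordinal 5 4 isT.
Definition f0 : 'I_2 := @Ordinal 2 0 isT.
Definition f1 : 'I_2 := @Ordinal 2 1 isT.

Lemma big_ord5 (V : nmodType) (F : 'I_5 -> V) :
  \sum_(i < 5) F i = F v0 + F v1 + F v2 + F v3 + F v4.
Proof.
rewrite !big_ord_recr big_ord0 /= add0r.
by congr (_ + _ + _ + _ + _); congr F; apply: val_inj.
Qed.

Lemma ord2_cases (f : 'I_2) : f = f0 \/ f = f1.
Proof. by case: f => [[|[|//]] lt_f2]; [left | right]; apply: val_inj. Qed.

Definition golden_edge : rel 'I_5 :=
  fun v u => (v, u) \in [:: (v0, v1); (v1, v2); (v4, v0); (v4, v3)].

(* [u \in Nb v] as a plain boolean, which unlike finset membership computes. *)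
Definition adjacent (v u : 'I_5) : bool := (u == v) || golden_edge v u.

Definition golden_instance (x h : rat) : fl_instance :=
  {| fl_n := 5; fl_E := golden_edge; fl_w := fun v => nth 0 [:: x; 1 + h; x + h; x - 1; 1] v;
     fl_k := 2; fl_U := fun f => if f == f0 then [set v0; v2] else [set v1; v3] |}.

Lemma golden_instance_valid x h : 1 < x -> 0 < h -> valid_instance (golden_instance x h).
Proof.
move=> x_gt1 h_gt0; split=> [[[|[|[|[|[|//]]]]] ?] /= | f]; try lra.
by apply/set0Pn; case: (ord2_cases f) => ->; [exists v0 | exists v1]; rewrite /= !inE eqxx.
Qed.

Section GoldenInstance.
Variables (R : realType) (x h : rat).
Local Notation I := (golden_instance x h).
Local Notation X := (ratr x : R).
Local Notation H := (ratr h : R).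

Definition place (a b : 'I_5) : FPP I := [ffun f => if f == f0 then a else b].

Lemma mem_Ns_place a b v f :
  (f \in Ns (place a b) v) = adjacent v (if f == f0 then a else b).
Proof. by rewrite !inE ffunE. Qed.

Lemma place_unshared (sg : cprofile R I) a b v f :
  is_cprofile (place a b) sg -> ~~ (adjacent v a && adjacent v b) ->
  sg v f = (adjacent v (if f == f0 then a else b))%:R.
Proof.
move=> cp unshared; rewrite -mem_Ns_place; apply: cprofile_unshared => // g g'.
rewrite !mem_Ns_place.
by case: (ord2_cases g) => ->; case: (ord2_cases g') => -> //= ga gb; rewrite ga gb in unshared.
Qed.

Lemma place_shared (sg : cprofile R I) a b v f g :
  client_eq (place a b) sg -> adjacent v a -> adjacent v b -> f != g ->
  load_minus sg v g < load_minus sg v f -> sg v f = 0 /\ sg v g = 1.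
Proof.
move=> ce va vb fg lt_gf.
have near j : j \in Ns (place a b) v by rewrite mem_Ns_place; case: ifP.
have f_avoided : sg v f = 0 := client_eq_avoid ce (near f) (near g) lt_gf.
split=> //; apply: cprofile_eq1 ce.1 (near g) _ => j jg.
suff -> : j = f by [].
by move: fg jg; case: (ord2_cases f) => ->; case: (ord2_cases g) => ->;
  case: (ord2_cases j) => ->.
Qed.

Lemma golden_load (sg : cprofile R I) f : load sg f =
  sg v0 f * X + sg v1 f * (1 + H) + sg v2 f * (X + H) + sg v3 f * (X - 1) + sg v4 f.
Proof. by rewrite /load big_ord5 /= rmorphB !rmorphD !rmorph1 mulr1. Qed.

Lemma golden_load_minus (sg : cprofile R I) u f : load_minus sg u f =
  (if v0 != u then sg v0 f * X else 0) + (if v1 != u then sg v1 f * (1 + H) else 0) +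
  (if v2 != u then sg v2 f * (X + H) else 0) + (if v3 != u then sg v3 f * (X - 1) else 0) +
  (if v4 != u then sg v4 f else 0).
Proof.
by rewrite /load_minus big_mkcond big_ord5 /= rmorphB !rmorphD !rmorph1 mulr1.
Qed.

Lemma place_v0_v1_loads (sg : cprofile R I) : 0 < h -> client_eq (place v0 v1) sg ->
  load sg f0 = X + 1 /\ load sg f1 = 1 + H.
Proof.
move=> h_gt0 ce; have cp := ce.1; have H_gt0 : 0 < H by rewrite ltr0q.
rewrite !golden_load; have [-> ->] : sg v0 f1 = 0 /\ sg v0 f0 = 1.
  apply: (place_shared ce) => //.
  by rewrite !golden_load_minus /= !(place_unshared _ cp) //=; lra.
by rewrite !(place_unshared _ cp) //=; split; ring.
Qed.

Lemma place_v0_v3_loads (sg : cprofile R I) : client_eq (place v0 v3) sg ->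
  load sg f0 = X /\ load sg f1 = X.
Proof.
move=> ce; have cp := ce.1.
rewrite !golden_load; have [-> ->] : sg v4 f0 = 0 /\ sg v4 f1 = 1.
  apply: (place_shared ce) => //.
  by rewrite !golden_load_minus /= !(place_unshared _ cp) //=; lra.
by rewrite !(place_unshared _ cp) //=; split; ring.
Qed.

Lemma place_v2_v3_loads (sg : cprofile R I) : client_eq (place v2 v3) sg ->
  load sg f0 = 1 + X + 2 * H /\ load sg f1 = X.
Proof.
move=> [cp _].
by rewrite !golden_load !(place_unshared _ cp) //=; split; ring.
Qed.

Lemma place_v2_v1_loads (sg : cprofile R I) : 0 < h -> client_eq (place v2 v1) sg ->
  load sg f0 = X + H /\ load sg f1 = X + 1 + H.
Proof.
move=> h_gt0 ce; have cp := ce.1; have H_gt0 : 0 < H by rewrite ltr0q.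
rewrite !golden_load; have [-> ->] : sg v1 f0 = 0 /\ sg v1 f1 = 1.
  apply: (place_shared ce) => //.
  by rewrite !golden_load_minus /= !(place_unshared _ cp) //=; lra.
by rewrite !(place_unshared _ cp) //=; split; ring.
Qed.

Lemma placeE (s : FPP I) : s = place (s f0) (s f1).
Proof. by apply/ffunP => f; rewrite ffunE; case: (ord2_cases f) => ->. Qed.

Lemma deviate_place0 a b y : deviate (place a b) f0 y = place y b.
Proof. by apply/ffunP => f; rewrite !ffunE; case: (ord2_cases f) => ->. Qed.

Lemma deviate_place1 a b y : deviate (place a b) f1 y = place a y.
Proof. by apply/ffunP => f; rewrite !ffunE; case: (ord2_cases f) => ->. Qed.

Lemma is_FPP_place a b : a \in [set v0; v2] -> b \in [set v1; v3] -> is_FPP (place a b).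
Proof. by move=> aU bU f; rewrite ffunE; case: (ord2_cases f) => ->. Qed.

Lemma golden_improving_deviation (alpha : R) (sg : full_cprofile R I) (s : FPP I) :
  0 < h -> alpha * (1 + H) < X -> alpha * X < X + 1 -> alpha * (X + H) < X + 1 ->
  full_client_eq sg -> is_FPP s ->
  exists f, exists2 y, y \in fl_U I f & load (sg (deviate s f y)) f > alpha * load (sg s) f.
Proof.
move=> h_gt0 gain_v0_v1 gain_x gain_v2_v1 eq_sg s_FPP; have H_gt0 : 0 < H by rewrite ltr0q.
have eq_at a b : a \in [set v0; v2] -> b \in [set v1; v3] ->
    client_eq (place a b) (sg (place a b)).
  by move=> aU bU; apply/eq_sg/is_FPP_place.
rewrite (placeE s); case/set2P: (s_FPP f0) => ->; case/set2P: (s_FPP f1) => ->.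
- exists f1; exists v3; first by rewrite /= !inE.
  rewrite deviate_place1.
  have [_ ->] := place_v0_v3_loads (eq_at _ _ (set21 _ _) (set22 _ _)).
  by have [_ ->] := place_v0_v1_loads h_gt0 (eq_at _ _ (set21 _ _) (set21 _ _)).
- exists f0; exists v2; first by rewrite /= !inE.
  rewrite deviate_place0.
  have [-> _] := place_v2_v3_loads (eq_at _ _ (set22 _ _) (set22 _ _)).
  have [-> _] := place_v0_v3_loads (eq_at _ _ (set21 _ _) (set22 _ _)).
  lra.
- exists f0; exists v0; first by rewrite /= !inE.
  rewrite deviate_place0.
  have [-> _] := place_v0_v1_loads h_gt0 (eq_at _ _ (set21 _ _) (set21 _ _)).
  by have [-> _] := place_v2_v1_loads h_gt0 (eq_at _ _ (set22 _ _) (set21 _ _)).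
- exists f1; exists v1; first by rewrite /= !inE.
  rewrite deviate_place1.
  have [_ ->] := place_v2_v1_loads h_gt0 (eq_at _ _ (set22 _ _) (set21 _ _)).
  have [_ ->] := place_v2_v3_loads (eq_at _ _ (set22 _ _) (set22 _ _)).
  lra.
Qed.
End GoldenInstance.

Section GoldenRatio.
Variable R : realType.
Local Notation phi := (golden_ratio R).

Lemma golden_ratio_bounds : 1 < phi < 2.
Proof.
have s5_ge0 : 0 <= Num.sqrt (5 : R) := sqrtr_ge0 _.
have s5_sqr : Num.sqrt (5 : R) ^+ 2 = 5 by rewrite sqr_sqrtr.
rewrite /golden_ratio; apply/andP; split; nra.
Qed.

Lemma sqr_lt_add1_below_golden_ratio (t : R) : 0 <= t -> t < phi -> t ^+ 2 < t + 1.
Proof.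
have s5_ge0 : 0 <= Num.sqrt (5 : R) := sqrtr_ge0 _.
have s5_sqr : Num.sqrt (5 : R) ^+ 2 = 5 by rewrite sqr_sqrtr.
rewrite /golden_ratio; set s5 := Num.sqrt 5 in s5_ge0 s5_sqr * => t_ge0 t_lt.
(* [t ^+ 2 - t - 1] factors through the two roots [(1 + s5) / 2] and [(1 - s5) / 2 < 0]. *)
have above_conjugate : 0 < t - (1 - s5) / 2 by nra.
have : (t - (1 + s5) / 2) * (t - (1 - s5) / 2) < 0 by rewrite pmulr_llt0 // subr_lt0.
nra.
Qed.

Lemma exists_golden_parameters (alpha : R) : alpha < phi ->
  exists x h : rat, [/\ 1 < x, 0 < h, alpha * (1 + ratr h) < ratr x,
    alpha * ratr x < ratr x + 1 & alpha * (ratr x + ratr h) < ratr x + 1].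
Proof.
move=> alpha_lt; have /andP [phi_gt1 phi_lt2] := golden_ratio_bounds.
have [x] : exists x, ratr x \in `](Num.max alpha 1), phi[.
  by apply: rat_in_itvoo; rewrite gt_max alpha_lt phi_gt1.
rewrite in_itv /= gt_max => /andP [/andP [alpha_lt_x x_gt1] x_lt_phi].
set X := ratr x in alpha_lt_x x_gt1 x_lt_phi *.
have gain_x : alpha * X < X + 1.
  have := sqr_lt_add1_below_golden_ratio (ltW (lt_trans ltr01 x_gt1)) x_lt_phi; nra.
pose d := Num.min (X - alpha) (X + 1 - alpha * X).
have d_gt0 : 0 < d by rewrite lt_min !subr_gt0 alpha_lt_x gain_x.
have [h] : exists h, ratr h \in `]0, d / 2[ by apply: rat_in_itvoo; rewrite divr_gt0.
rewrite in_itv /= => /andP [H_gt0 H_lt].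
have alphaH_lt_d : alpha * ratr h < d by nra.
have [d_le1 d_le2] : d <= X - alpha /\ d <= X + 1 - alpha * X by rewrite !ge_min !lexx ?orbT.
exists x, h; split; [by rewrite -(ltr_rat R) rmorph1 | by rewrite -(ltr0q R) | lra.. ].
Qed.
End GoldenRatio.

Theorem mainTheorem3 (R : realType) (eps : R) :
  0 < eps ->
  exists I : fl_instance, valid_instance I /\
    ~ (exists (s : FPP I) (sg : full_cprofile R I),
         approx_SPE (golden_ratio R - eps) s sg).
Proof.
move=> eps_gt0; have alpha_lt : golden_ratio R - eps < golden_ratio R by lra.
have [x [h [x_gt1 h_gt0 gain_v0_v1 gain_x gain_v2_v1]]] := exists_golden_parameters alpha_lt.
exists (golden_instance x h); split; first exact: golden_instance_valid.
case=> s [sg [s_FPP [eq_sg no_deviation]]]; apply: no_deviation.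
exact: golden_improving_deviation.
Qed.
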